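(* Let $n\ge 2$, $L>0$, $T>0$, let $b_{ij}$ ($i\neq j$) be real numbers, and let $P=(P_1,\dots,P_n)$, $V=(V_1,\dots,V_n)$ with $P_i,V_i\in C^3([0,T]\times\mathbb T_L)$, $\mathbb T_L=\mathbb R/L\mathbb Z$, be a solution of $$\partial_tP_i+\partial_x(P_iV_i)=0,\qquad -\sum_{j=1}^nb_{ij}P_j(V_i-V_j)=\partial_x\log P_i-\frac{1}{\sum_{j=1}^nP_j}\sum_{j=1}^nP_j\partial_x\log P_j,\qquad \sum_{j=1}^nP_jV_j=0,$$ $i=1,\dots,n$, with $P_i(x,t)>0$ for all $x,t$ and $i$, and with $\sum_{j=1}^nP_j(x,0)=1$ for all $x$. For $N\ge1$, $h=L/N$, $\Delta t>0$ and $k\ge0$ with $(k+1)\Delta t\le T$, set $P^k_{i,\ell}=P_i(\ell h,k\Delta t)$ (cell-centered) and $V^{k}_{i,\ell+\frac12}=V_i((\ell+\frac12)h,k\Delta t)$ (edge-centered), and define the local truncation errors $$\tau^1_{i,\ell}=\frac{P^{k+1}_{i,\ell}-P^k_{i,\ell}}{\Delta t}+\big(d_h(\hat P^k_iV^{k+1}_i)\big)_\ell,$$ $$\tau^2_{i,\ell+\frac12}=\Big(D_h\log P^{k+1}_i-\frac{1}{\sum_{j=1}^n\hat P^k_j}\sum_{j=1}^n\hat P^k_jD_h\log P^{k+1}_j+\sum_{j=1}^nb_{ij}\hat P^k_j(V^{k+1}_i-V^{k+1}_j)\Big)_{\ell+\frac12},$$ $$\tau^3_{\ell+\frac12}=\sum_{i=1}^n\hat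 P^k_{i,\ell+\frac12}V^{k+1}_{i,\ell+\frac12}.$$ Then there is a constant $C>0$ depending on $(P,V)$ (but not on $h$, $\Delta t$, $k$, $i$, $\ell$) such that $$|\tau^1_{i,\ell}|,\ |\tau^2_{i,\ell+\frac12}|,\ |\tau^3_{\ell+\frac12}|\le C(\Delta t+h^2).$$
   Context: Difference operators on $N$-periodic grids: for edge-centered $\phi$, $(d_h\phi)_\ell=(\phi_{\ell+\frac12}-\phi_{\ell-\frac12})/h$; for cell-centered $f$, $(D_hf)_{\ell+\frac12}=(f_{\ell+1}-f_\ell)/h$ and $\hat f_{\ell+\frac12}=(f_\ell+f_{\ell+1})/2$. Products and logarithms are pointwise. *)

From Stdlib Require Import Reals ZArith List.
From Coquelicot Require Import Coquelicot.
Open Scope R_scope.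

Fixpoint sumR (n : nat) (f : nat -> R) : R :=
  match n with
  | O => 0
  | S m => sumR m f + f m
  end.

(* Iterated partial derivatives of g : R -> R -> R (arguments x then t).
   The list of directions is read left to right as the outermost derivative
   first: true = d/dx, false = d/dt. *)
Fixpoint pd (ds : list bool) (g : R -> R -> R) : R -> R -> R :=
  match ds with
  | nil => g
  | true :: ds' => fun x t => Derive (fun y => pd ds' g y t) x
  | false :: ds' => fun x t => Derive (fun s => pd ds' g x s) t
  end.

Definition C3 (g : R -> R -> R) : Prop :=
  (forall ds : list bool, (length ds < 3)%nat -> forall x t : R,
      ex_derive (fun y => pd ds g y t) x /\ ex_derive (fun s => pd ds g x s) t) /\
  (forall ds : list bool, (length ds <= 3)%nat -> forall x t : R,
      continuous (fun z : R * R => pd ds g (fst z) (snd z)) (x, t)).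

Definition periodic_x (L : R) (g : R -> R -> R) : Prop :=
  forall x t, g (x + L) t = g x t.

Definition is_solution (n : nat) (T : R) (b : nat -> nat -> R)
    (P V : nat -> R -> R -> R) : Prop :=
  forall t x, 0 <= t <= T ->
    (forall i, (i < n)%nat ->
       Derive (fun s => P i x s) t + Derive (fun y => P i y t * V i y t) x = 0) /\
    (forall i, (i < n)%nat ->
       - sumR n (fun j => b i j * P j x t * (V i x t - V j x t))
       = Derive (fun y => ln (P i y t)) x
         - / sumR n (fun j => P j x t)
           * sumR n (fun j => P j x t * Derive (fun y => ln (P j y t)) x)) /\
    sumR n (fun j => P j x t * V j x t) = 0.

(* Grid values: P^k_{i,l} = P_i(l h, k dt), V^k_{i,l+1/2} = V_i((l+1/2)h, k dt). *)
Definition Pc (P : nat -> R -> R -> R) (h dt : R) (k : nat) (i : nat) (l : Z) : R :=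
  P i (IZR l * h) (INR k * dt).
Definition Ve (V : nat -> R -> R -> R) (h dt : R) (k : nat) (i : nat) (l : Z) : R :=
  V i ((IZR l + /2) * h) (INR k * dt).
Definition Phat (P : nat -> R -> R -> R) (h dt : R) (k : nat) (i : nat) (l : Z) : R :=
  (Pc P h dt k i l + Pc P h dt k i (l + 1)) / 2.
Definition DlogP (P : nat -> R -> R -> R) (h dt : R) (k : nat) (i : nat) (l : Z) : R :=
  (ln (Pc P h dt (S k) i (l + 1)) - ln (Pc P h dt (S k) i l)) / h.

Definition tau1 (P V : nat -> R -> R -> R) (h dt : R) (k i : nat) (l : Z) : R :=
  (Pc P h dt (S k) i l - Pc P h dt k i l) / dt
  + (Phat P h dt k i l * Ve V h dt (S k) i l
     - Phat P h dt k i (l - 1) * Ve V h dt (S k) i (l - 1)) / h.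

Definition tau2 (n : nat) (b : nat -> nat -> R) (P V : nat -> R -> R -> R)
    (h dt : R) (k i : nat) (l : Z) : R :=
  DlogP P h dt k i l
  - / sumR n (fun j => Phat P h dt k j l)
    * sumR n (fun j => Phat P h dt k j l * DlogP P h dt k j l)
  + sumR n (fun j => b i j * Phat P h dt k j l
                     * (Ve V h dt (S k) i l - Ve V h dt (S k) j l)).

Definition tau3 (n : nat) (P V : nat -> R -> R -> R) (h dt : R) (k : nat) (l : Z) : R :=
  sumR n (fun i => Phat P h dt k i l * Ve V h dt (S k) i l).

From Stdlib Require Import Reals ZArith List Lra Lia.
From Coquelicot Require Import Coquelicot.
Open Scope R_scope.

(* Each truncation error is a discrete operator applied to grid values of the exact
   solution, minus the corresponding continuous operator at the point where the equations
   hold: (x_l, t^(k+1)) for tau1 and (x_(l+1/2), t^(k+1)) for tau2 and tau3.  By Taylor's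
   theorem every elementary approximation is O(dt + h^2): backward time quotients and the
   time lag of hat P^k are O(dt), centred quotients and midpoint averages are O(h^2).  These
   combine through the discrete product rule for tau1, a perturbation bound for the weighted
   mean sum_j hat P_j D_h log P_j / sum_j hat P_j for tau2 (its weights are bounded below
   because P > 0), and linearity for tau3.  All constants come from bounds on [0,T] x R of the
   derivatives of order <= 3 of P_i and V_i, of 1/P_i and of b_ij, which exist because these
   functions are continuous and L-periodic in x. *)

Lemma Derive_of_is_derive (f df : R -> R) :
  (forall y, is_derive f y (df y)) -> forall y, Derive (fun z => f z) y = df y.
Proof. intros Hf y. now apply is_derive_unique. Qed.

Lemma MVT_Rabs_le (f df : R -> R) (a b B : R) :
  (forall y, Rmin a b <= y <= Rmax a b -> is_derive f y (df y) /\ Rabs (df y) <= B) ->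
  Rabs (f b - f a) <= B * Rabs (b - a).
Proof.
  intros Hf.
  destruct (MVT_gen f a b df) as [c [Hc ->]].
  - intros y Hy. apply Hf. split; apply Rlt_le; apply Hy.
  - intros y Hy. apply continuity_pt_filterlim.
    apply (ex_derive_continuous (V := R_NormedModule)). exists (df y). apply Hf, Hy.
  - rewrite Rabs_mult. apply Rmult_le_compat_r; [apply Rabs_pos | apply Hf, Hc].
Qed.

Lemma taylor1_Rabs_le (f f1 f2 : R -> R) (a b M : R) :
  (forall y, Rmin a b <= y <= Rmax a b ->
     is_derive f y (f1 y) /\ is_derive f1 y (f2 y) /\ Rabs (f2 y) <= M) ->
  Rabs (f b - f a - (b - a) * f1 a) <= M * (b - a) ^ 2.
Proof.
  intros Hf.
  assert (Hf1 : forall y, Rmin a b <= y <= Rmax a b -> Rabs (f1 y - f1 a) <= M * Rabs (b - a)).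
  { intros y Hy. eapply Rle_trans.
    - apply (MVT_Rabs_le f1 f2 a y M). intros z Hz.
      apply Hf. unfold Rmin, Rmax in *. destruct (Rle_dec a y), (Rle_dec a b); lra.
    - apply Rmult_le_compat_l.
      + destruct (Hf a) as (_ & _ & Ha); [unfold Rmin, Rmax; destruct Rle_dec; lra|].
        pose proof (Rabs_pos (f2 a)); lra.
      + unfold Rmin, Rmax in Hy. unfold Rabs.
        destruct (Rle_dec a b), (Rcase_abs (y - a)), (Rcase_abs (b - a)); lra. }
  pose proof (MVT_Rabs_le (fun y => f y - (y - a) * f1 a) (fun y => f1 y - f1 a) a b
                (M * Rabs (b - a))) as K.
  replace (f b - f a - (b - a) * f1 a)
    with (f b - (b - a) * f1 a - (f a - (a - a) * f1 a)) by ring.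
  rewrite <- (pow2_abs (b - a)).
  eapply Rle_trans; [apply K | apply Req_le; ring].
  intros y Hy. split; [|now apply Hf1].
  destruct (Hf y Hy) as [Hd _].
  auto_derive; [now exists (f1 y) |].
  replace (Derive (fun x => f x) y) with (f1 y) by (symmetry; now apply is_derive_unique).
  ring.
Qed.

Lemma Rabs_half_sum_le (u v A : R) :
  Rabs u <= A -> Rabs v <= A -> Rabs ((u + v) / 2) <= A.
Proof. unfold Rabs; repeat destruct Rcase_abs; lra. Qed.

Lemma Rabs_mul_sub_le (a b a' b' M ea eb : R) :
  Rabs a <= M -> Rabs b' <= M -> Rabs (a - a') <= ea -> Rabs (b - b') <= eb ->
  Rabs (a * b - a' * b') <= M * (ea + eb).
Proof.
  intros Ha Hb' Hea Heb.
  replace (a * b - a' * b') with (a * (b - b') + (a - a') * b') by ring.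
  eapply Rle_trans; [apply Rabs_triang|]. rewrite !Rabs_mult.
  assert (Rabs a * Rabs (b - b') <= M * eb) by (apply Rmult_le_compat; auto using Rabs_pos).
  assert (Rabs (a - a') * Rabs b' <= ea * M) by (apply Rmult_le_compat; auto using Rabs_pos).
  lra.
Qed.

Lemma discrete_product_rule (am ap vm vp h : R) : h <> 0 ->
  (ap * vp - am * vm) / h
  = (vm + vp) / 2 * ((ap - am) / h) + (am + ap) / 2 * ((vp - vm) / h).
Proof. intros Hh. field. exact Hh. Qed.

Lemma midpoint_error_le (g g1 g2 : R -> R) (M x δ : R) :
  (forall y, is_derive g y (g1 y)) -> (forall y, is_derive g1 y (g2 y)) ->
  (forall y, Rabs (g2 y) <= M) ->
  Rabs ((g (x - δ) + g (x + δ)) / 2 - g x) <= M * δ ^ 2.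
Proof.
  intros d1 d2 B.
  assert (Ht : forall b, Rabs (g b - g x - (b - x) * g1 x) <= M * (b - x) ^ 2).
  { intros b. apply (taylor1_Rabs_le g g1 g2). auto. }
  replace ((g (x - δ) + g (x + δ)) / 2 - g x)
    with ((g (x - δ) - g x - (x - δ - x) * g1 x + (g (x + δ) - g x - (x + δ - x) * g1 x)) / 2)
    by field.
  apply Rabs_half_sum_le; [replace (δ ^ 2) with ((x - δ - x) ^ 2) by ring
                          | replace (δ ^ 2) with ((x + δ - x) ^ 2) by ring]; apply Ht.
Qed.

Lemma central_quotient_error_le (g g1 g2 g3 : R -> R) (M x δ : R) :
  (forall y, is_derive g y (g1 y)) -> (forall y, is_derive g1 y (g2 y)) ->
  (forall y, is_derive g2 y (g3 y)) -> (forall y, Rabs (g3 y) <= M) -> 0 < δ ->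
  Rabs ((g (x + δ) - g (x - δ)) / (2 * δ) - g1 x) <= M * δ ^ 2.
Proof.
  intros d1 d2 d3 B Hδ.
  pose proof (MVT_Rabs_le (fun s => g (x + s) - g (x - s) - 2 * s * g1 x)
                (fun s => g1 (x + s) + g1 (x - s) - 2 * g1 x) 0 δ (2 * M * δ ^ 2)) as K.
  rewrite Rmin_left, Rmax_right in K by lra.
  replace ((g (x + δ) - g (x - δ)) / (2 * δ) - g1 x)
    with ((g (x + δ) - g (x - δ) - 2 * δ * g1 x - (g (x + 0) - g (x - 0) - 2 * 0 * g1 x))
          / (2 * δ))
    by (rewrite Rplus_0_r, Rminus_0_r; field; lra).
  unfold Rdiv. rewrite Rabs_mult, Rabs_inv, (Rabs_pos_eq (2 * δ)) by lra.
  apply (Rmult_le_reg_r (2 * δ)); [lra|].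
  rewrite Rmult_assoc, Rinv_l, Rmult_1_r by lra.
  eapply Rle_trans; [apply K | rewrite Rminus_0_r, Rabs_pos_eq by lra; apply Req_le; ring].
  intros s Hs. split.
  - auto_derive; [split; [now exists (g1 (x + s)) | split; [now exists (g1 (x - s)) | easy]]|].
    rewrite !(Derive_of_is_derive g g1 d1). unfold Rminus. ring.
  - pose proof (midpoint_error_le g1 g2 g3 M x s d2 d3 B) as Hm.
    replace (g1 (x + s) + g1 (x - s) - 2 * g1 x)
      with (2 * ((g1 (x - s) + g1 (x + s)) / 2 - g1 x)) by field.
    rewrite Rabs_mult, (Rabs_pos_eq 2) by lra.
    assert (0 <= M) by (pose proof (Rabs_pos (g3 0)); specialize (B 0); lra).
    assert (s ^ 2 <= δ ^ 2) by nra.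
    nra.
Qed.

Lemma log_derivatives (p p1 p2 p3 : R -> R) :
  (forall y, is_derive p y (p1 y)) -> (forall y, is_derive p1 y (p2 y)) ->
  (forall y, is_derive p2 y (p3 y)) -> (forall y, 0 < p y) ->
  (forall y, is_derive (fun z => ln (p z)) y (p1 y / p y)) /\
  (forall y, is_derive (fun z => p1 z / p z) y (p2 y / p y - (p1 y / p y) ^ 2)) /\
  (forall y, is_derive (fun z => p2 z / p z - (p1 z / p z) ^ 2) y
     (p3 y / p y - 3 * (p1 y / p y) * (p2 y / p y) + 2 * (p1 y / p y) ^ 3)).
Proof.
  intros d1 d2 d3 pos.
  split; [|split]; intros y; specialize (pos y); auto_derive;
    repeat split; try lra;
    try (now exists (p1 y)); try (now exists (p2 y)); try (now exists (p3 y));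
    rewrite ?(Derive_of_is_derive p p1 d1), ?(Derive_of_is_derive p1 p2 d2),
      ?(Derive_of_is_derive p2 p3 d3);
    field; lra.
Qed.

(* The constant bounds the third derivative of ln p computed in [log_derivatives]. *)
Lemma log_central_quotient_error_le (p p1 p2 p3 : R -> R) (M x δ : R) :
  (forall y, is_derive p y (p1 y)) -> (forall y, is_derive p1 y (p2 y)) ->
  (forall y, is_derive p2 y (p3 y)) -> (forall y, 0 < p y) ->
  (forall y, Rabs (p1 y) <= M /\ Rabs (p2 y) <= M /\ Rabs (p3 y) <= M /\ Rabs (/ p y) <= M) ->
  0 < δ ->
  Rabs ((ln (p (x + δ)) - ln (p (x - δ))) / (2 * δ) - p1 x / p x)
  <= (M ^ 2 + 3 * M ^ 4 + 2 * M ^ 6) * δ ^ 2.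
Proof.
  intros d1 d2 d3 pos B Hδ.
  destruct (log_derivatives p p1 p2 p3 d1 d2 d3 pos) as (l1 & l2 & l3).
  apply (central_quotient_error_le _ _ _ _ _ _ _ l1 l2 l3); [|exact Hδ].
  intros y. destruct (B y) as (b1 & b2 & b3 & bw).
  assert (Hq : forall q, Rabs q <= M -> Rabs (q / p y) <= M ^ 2).
  { intros q Hq. unfold Rdiv. rewrite Rabs_mult.
    replace (M ^ 2) with (M * M) by ring.
    apply Rmult_le_compat; auto using Rabs_pos. }
  pose proof (Hq _ b1) as u1. pose proof (Hq _ b2) as u2. pose proof (Hq _ b3) as u3.
  replace (M ^ 2 + 3 * M ^ 4 + 2 * M ^ 6) with (M ^ 2 + 3 * (M ^ 2 * M ^ 2) + 2 * (M ^ 2) ^ 3)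
    by ring.
  set (K := M ^ 2) in *.
  assert (Hprod : Rabs (p1 y / p y) * Rabs (p2 y / p y) <= K * K).
  { apply Rmult_le_compat; auto using Rabs_pos. }
  assert (Hcube : Rabs ((p1 y / p y) ^ 3) <= K ^ 3).
  { rewrite <- RPow_abs. apply pow_incr. split; [apply Rabs_pos | exact u1]. }
  unfold Rminus. eapply Rle_trans; [apply Rabs_triang|].
  eapply Rle_trans; [apply Rplus_le_compat_r, Rabs_triang|].
  rewrite Rabs_Ropp, Rmult_assoc, !Rabs_mult, !(Rabs_pos_eq 3), !(Rabs_pos_eq 2) by lra.
  lra.
Qed.

Lemma sumR_ext (n : nat) (f g : nat -> R) :
  (forall j, (j < n)%nat -> f j = g j) -> sumR n f = sumR n g.
Proof. induction n as [|n IH]; intros H; simpl; [easy|]. rewrite IH, H; auto. Qed.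

Lemma sumR_add (n : nat) (f g : nat -> R) :
  sumR n (fun j => f j + g j) = sumR n f + sumR n g.
Proof. induction n as [|n IH]; simpl; [ring|]. rewrite IH. ring. Qed.

Lemma sumR_sub (n : nat) (f g : nat -> R) :
  sumR n (fun j => f j - g j) = sumR n f - sumR n g.
Proof. induction n as [|n IH]; simpl; [ring|]. rewrite IH. ring. Qed.

Lemma sumR_mull (n : nat) (c : R) (f : nat -> R) :
  sumR n (fun j => c * f j) = c * sumR n f.
Proof. induction n as [|n IH]; simpl; [ring|]. rewrite IH. ring. Qed.

Lemma sumR_const (n : nat) (c : R) : sumR n (fun _ => c) = INR n * c.
Proof. induction n as [|n IH]; simpl sumR; [simpl; ring|]. rewrite IH, S_INR. ring. Qed.

Lemma sumR_le (n : nat) (f g : nat -> R) :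
  (forall j, (j < n)%nat -> f j <= g j) -> sumR n f <= sumR n g.
Proof.
  induction n as [|n IH]; intros H; simpl; [lra|].
  apply Rplus_le_compat; auto.
Qed.

Lemma Rabs_sumR_le (n : nat) (f g : nat -> R) :
  (forall j, (j < n)%nat -> Rabs (f j) <= g j) -> Rabs (sumR n f) <= sumR n g.
Proof.
  induction n as [|n IH]; intros H; simpl; [rewrite Rabs_R0; lra|].
  eapply Rle_trans; [apply Rabs_triang | apply Rplus_le_compat; auto].
Qed.

Definition wmean (n : nat) (w f : nat -> R) : R :=
  / sumR n w * sumR n (fun j => w j * f j).

Section WeightedMean.

Variables (n : nat) (w : nat -> R).
Hypothesis n_pos : (0 < n)%nat.
Hypothesis w_pos : forall j, (j < n)%nat -> 0 < w j.

Lemma sumR_pos : 0 < sumR n w.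
Proof.
  destruct n as [|m]; [lia|]. simpl.
  assert (0 <= sumR m w).
  { rewrite <- (Rmult_0_r (INR m)), <- sumR_const. apply sumR_le.
    intros j Hj. apply Rlt_le, w_pos. lia. }
  specialize (w_pos m ltac:(lia)). lra.
Qed.

Lemma Rabs_wmean_le (f : nat -> R) (B : R) :
  (forall j, (j < n)%nat -> Rabs (f j) <= B) -> Rabs (wmean n w f) <= B.
Proof.
  intros Hf. pose proof sumR_pos as Hs. unfold wmean.
  rewrite Rabs_mult, Rabs_inv, (Rabs_pos_eq (sumR n w)) by lra.
  apply (Rmult_le_reg_l (sumR n w)); [lra|].
  rewrite <- Rmult_assoc, Rinv_r, Rmult_1_l by lra.
  rewrite Rmult_comm, <- sumR_mull.
  apply Rabs_sumR_le. intros j Hj.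
  rewrite Rabs_mult, Rabs_pos_eq, Rmult_comm by (apply Rlt_le, w_pos, Hj).
  apply Rmult_le_compat_r; [apply Rlt_le, w_pos, Hj | auto].
Qed.

End WeightedMean.

Section Perturbation.

Variables (n : nat) (A Pe D lam : nat -> R) (M ε δ Λ : R).
Hypothesis n_pos : (0 < n)%nat.
Hypothesis M_pos : 0 < M.
Hypothesis A_lb : forall j, (j < n)%nat -> / M <= A j.
Hypothesis Pe_pos : forall j, (j < n)%nat -> 0 < Pe j.
Hypothesis A_err : forall j, (j < n)%nat -> Rabs (A j - Pe j) <= ε.
Hypothesis D_err : forall j, (j < n)%nat -> Rabs (D j - lam j) <= δ.
Hypothesis lam_bound : forall j, (j < n)%nat -> Rabs (lam j) <= Λ.

Lemma wmean_perturbation_le :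
  Rabs (wmean n A D - wmean n Pe lam) <= δ + M * (INR n * (ε * (2 * Λ))).
Proof.
  assert (A_pos : forall j, (j < n)%nat -> 0 < A j).
  { intros j Hj. specialize (A_lb j Hj). pose proof (Rinv_0_lt_compat M M_pos). lra. }
  pose proof (sumR_pos n A n_pos A_pos) as SA.
  pose proof (sumR_pos n Pe n_pos Pe_pos) as SPe.
  set (m := wmean n Pe lam).
  assert (Hm : m * sumR n Pe = sumR n (fun j => Pe j * lam j)).
  { unfold m, wmean. field. lra. }
  assert (Hid : wmean n A D - m
                = wmean n A (fun j => D j - lam j)
                  + / sumR n A * sumR n (fun j => (A j - Pe j) * (lam j - m))).
  { unfold wmean.
    rewrite (sumR_ext n (fun j => A j * (D j - lam j)) (fun j => A j * D j - A j * lam j))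
      by (intros; ring).
    rewrite (sumR_ext n (fun j => (A j - Pe j) * (lam j - m))
               (fun j => A j * lam j - Pe j * lam j - m * A j + m * Pe j))
      by (intros; ring).
    rewrite sumR_add, !sumR_sub, !sumR_mull, Hm. field. lra. }
  assert (Hinv : Rabs (/ sumR n A) <= M).
  { assert (/ M <= sumR n A).
    { apply Rle_trans with (INR n * / M).
      - assert (1 <= INR n) by (apply (le_INR 1); lia).
        pose proof (Rinv_0_lt_compat M M_pos). nra.
      - rewrite <- sumR_const. now apply sumR_le. }
    rewrite Rabs_pos_eq by (apply Rlt_le, Rinv_0_lt_compat; lra).
    rewrite <- (Rinv_inv M). apply Rinv_le_contravar; [apply Rinv_0_lt_compat|]; lra. }
  assert (Hsum : Rabs (sumR n (fun j => (A j - Pe j) * (lam j - m)))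
                 <= INR n * (ε * (2 * Λ))).
  { rewrite <- sumR_const. apply Rabs_sumR_le. intros j Hj.
    rewrite Rabs_mult. apply Rmult_le_compat; auto using Rabs_pos.
    pose proof (Rabs_wmean_le n Pe n_pos Pe_pos lam Λ lam_bound) as Hmb. fold m in Hmb.
    unfold Rminus. eapply Rle_trans; [apply Rabs_triang|].
    rewrite Rabs_Ropp. specialize (lam_bound j Hj). lra. }
  rewrite Hid. eapply Rle_trans; [apply Rabs_triang|].
  apply Rplus_le_compat.
  - exact (Rabs_wmean_le n A n_pos A_pos _ δ D_err).
  - rewrite Rabs_mult. apply Rmult_le_compat; auto using Rabs_pos.
Qed.

Lemma flux_balance_perturbation_le (i : nat) (v c : nat -> R) (B : R) :
  (i < n)%nat ->
  (forall j, (j < n)%nat -> Rabs (v j) <= M) ->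
  (forall j, (j < n)%nat -> Rabs (c j) <= B) ->
  lam i - wmean n Pe lam + sumR n (fun j => c j * Pe j * (v i - v j)) = 0 ->
  Rabs (D i - wmean n A D + sumR n (fun j => c j * A j * (v i - v j)))
  <= 2 * δ + M * (INR n * (ε * (2 * Λ))) + INR n * (B * ε * (2 * M)).
Proof.
  intros Hi Hv Hc Heq.
  replace (D i - wmean n A D + sumR n (fun j => c j * A j * (v i - v j)))
    with ((D i - lam i) - (wmean n A D - wmean n Pe lam)
          + sumR n (fun j => c j * (A j - Pe j) * (v i - v j)))
    by (rewrite (sumR_ext n (fun j => c j * (A j - Pe j) * (v i - v j))
                   (fun j => c j * A j * (v i - v j) - c j * Pe j * (v i - v j)))
          by (intros; ring);
        rewrite sumR_sub; lra).
  assert (Hsum : Rabs (sumR n (fun j => c j * (A j - Pe j) * (v i - v j)))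
                 <= INR n * (B * ε * (2 * M))).
  { rewrite <- sumR_const. apply Rabs_sumR_le. intros j Hj.
    rewrite !Rabs_mult. apply Rmult_le_compat; [| |apply Rmult_le_compat|];
      auto using Rabs_pos, Rmult_le_pos.
    unfold Rminus. eapply Rle_trans; [apply Rabs_triang|].
    rewrite Rabs_Ropp. pose proof (Hv i Hi). pose proof (Hv j Hj). lra. }
  pose proof wmean_perturbation_le as Hw. specialize (D_err i Hi).
  unfold Rminus at 1. eapply Rle_trans; [apply Rabs_triang|].
  eapply Rle_trans; [apply Rplus_le_compat_r, Rabs_triang|].
  rewrite Rabs_Ropp. lra.
Qed.

Lemma flux_sum_perturbation_le (v : nat -> R) :
  (forall j, (j < n)%nat -> Rabs (v j) <= M) ->
  sumR n (fun j => Pe j * v j) = 0 ->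
  Rabs (sumR n (fun j => A j * v j)) <= INR n * (ε * M).
Proof.
  intros Hv Heq.
  rewrite (sumR_ext n _ (fun j => (A j - Pe j) * v j + Pe j * v j)) by (intros; ring).
  rewrite sumR_add, Heq, Rplus_0_r, <- sumR_const.
  apply Rabs_sumR_le. intros j Hj. rewrite Rabs_mult.
  apply Rmult_le_compat; auto using Rabs_pos.
Qed.

End Perturbation.

Definition strip_bounded (T M : R) (g : R -> R -> R) : Prop :=
  forall x t, 0 <= t <= T -> Rabs (g x t) <= M.

Definition derivs_bounded (T M : R) (g : R -> R -> R) : Prop :=
  forall ds, (length ds <= 3)%nat -> strip_bounded T M (pd ds g).

Lemma continuous_rect_bounded (g : R -> R -> R) (a b c d : R) :
  (forall x y, a <= x <= b -> c <= y <= d -> continuity_2d_pt g x y) ->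
  exists M, forall x y, a <= x <= b -> c <= y <= d -> Rabs (g x y) <= M.
Proof.
  intros Hg.
  destruct (uniform_continuity_2d g a b c d Hg (mkposreal 1 Rlt_0_1)) as [δ Hδ].
  pose proof (cond_pos δ) as δ_pos.
  (* Induction on the number of steps of length δ/2 separating (x, y) from (a, c). *)
  assert (Hwalk : forall m : nat, forall x y, a <= x <= b -> c <= y <= d ->
            x - a <= INR m * (δ / 2) -> y - c <= INR m * (δ / 2) ->
            Rabs (g x y) <= Rabs (g a c) + INR m).
  { induction m as [|m IH]; intros x y Hx Hy Hxm Hym.
    - simpl in *. replace x with a by lra. replace y with c by lra. lra.
    - rewrite S_INR in Hxm, Hym |- *.
      assert (0 <= INR m * (δ / 2)) by (apply Rmult_le_pos; [apply pos_INR | lra]).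
      set (x' := Rmax a (x - δ / 2)). set (y' := Rmax c (y - δ / 2)).
      assert (a <= x' <= b /\ x' - a <= INR m * (δ / 2) /\ Rabs (x - x') < δ)
        as (Hx' & Hxm' & Hdx).
      { unfold x', Rmax. destruct Rle_dec; rewrite Rabs_pos_eq; lra. }
      assert (c <= y' <= d /\ y' - c <= INR m * (δ / 2) /\ Rabs (y - y') < δ)
        as (Hy' & Hym' & Hdy).
      { unfold y', Rmax. destruct Rle_dec; rewrite Rabs_pos_eq; lra. }
      pose proof (Hδ x' y' x y Hx' Hy' Hx Hy Hdx Hdy) as Hstep. simpl in Hstep.
      pose proof (IH x' y' Hx' Hy' Hxm' Hym').
      pose proof (Rabs_triang_inv (g x y) (g x' y')). lra. }
  destruct (INR_unbounded ((b - a + (d - c)) / (δ / 2))) as [m Hm].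
  exists (Rabs (g a c) + INR m). intros x y Hx Hy.
  assert (b - a + (d - c) < INR m * (δ / 2)).
  { apply (Rmult_lt_compat_r (δ / 2)) in Hm; [|lra].
    unfold Rdiv at 1 in Hm. rewrite Rmult_assoc, Rinv_l, Rmult_1_r in Hm by lra. lra. }
  apply Hwalk; lra.
Qed.

Lemma periodic_x_IZR (L : R) (g : R -> R -> R) :
  periodic_x L g -> forall z x t, g (x + IZR z * L) t = g x t.
Proof.
  intros Hg.
  assert (Hnat : forall (m : nat) x t, g (x + INR m * L) t = g x t).
  { induction m as [|m IH]; intros x t; [simpl; now rewrite Rmult_0_l, Rplus_0_r|].
    rewrite S_INR. replace (x + (INR m + 1) * L) with (x + INR m * L + L) by ring.
    now rewrite Hg. }
  intros z x t. destruct (Z_le_gt_dec 0 z) as [Hz|Hz].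
  - rewrite <- (Z2Nat.id z Hz), <- INR_IZR_INZ. apply Hnat.
  - rewrite <- (Hnat (Z.to_nat (- z)) (x + IZR z * L) t).
    rewrite INR_IZR_INZ, Z2Nat.id, opp_IZR by lia. f_equal. ring.
Qed.

Lemma periodic_strip_bounded (L T : R) (g : R -> R -> R) :
  0 < L -> periodic_x L g ->
  (forall x t, 0 <= t <= T -> continuity_2d_pt g x t) ->
  exists M, strip_bounded T M g.
Proof.
  intros HL Hp Hc.
  destruct (continuous_rect_bounded g 0 L 0 T) as [M HM]; [intros; now apply Hc|].
  exists M. intros x t Ht.
  destruct (archimed (x / L)) as [Hup1 Hup2].
  set (z := up (x / L)) in *.
  replace (g x t) with (g (x - IZR (z - 1) * L) t).
  - apply HM; [|exact Ht].
    rewrite minus_IZR.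
    assert (x = x / L * L) by (field; lra).
    split; nra.
  - rewrite <- (periodic_x_IZR L g Hp (z - 1) _ t). f_equal. ring.
Qed.

Lemma Derive_periodic (f : R -> R) (L x : R) :
  (forall y, f (y + L) = f y) -> Derive f (x + L) = Derive f x.
Proof.
  intros Hf. unfold Derive. f_equal. apply Lim_ext. intros y.
  replace (x + L + y) with (x + y + L) by ring. now rewrite !Hf.
Qed.

Lemma pd_periodic_x (L : R) (g : R -> R -> R) (ds : list bool) :
  periodic_x L g -> periodic_x L (pd ds g).
Proof.
  intros Hg. induction ds as [|[|] ds IH]; intros x t; simpl.
  - apply Hg.
  - apply Derive_periodic. intros y. apply IH.
  - apply Derive_ext. intros s. apply IH.
Qed.

Lemma C3_continuity_2d_pt (g : R -> R -> R) (ds : list bool) (x t : R) :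
  C3 g -> (length ds <= 3)%nat -> continuity_2d_pt (pd ds g) x t.
Proof. intros [_ Hc] Hl. now apply continuity_2d_pt_filterlim, Hc. Qed.

Lemma C3_is_derive_x (g : R -> R -> R) (ds : list bool) (x t : R) :
  C3 g -> (length ds < 3)%nat ->
  is_derive (fun y => pd ds g y t) x (pd (true :: ds) g x t).
Proof. intros [Hd _] Hl. apply Derive_correct, (Hd ds Hl x t). Qed.

Lemma C3_is_derive_t (g : R -> R -> R) (ds : list bool) (x t : R) :
  C3 g -> (length ds < 3)%nat ->
  is_derive (fun s => pd ds g x s) t (pd (false :: ds) g x t).
Proof. intros [Hd _] Hl. apply Derive_correct, (Hd ds Hl x t). Qed.

Lemma uniform_bound_nat (Q : nat -> R -> Prop) (n : nat) :
  (forall i M M', Q i M -> M <= M' -> Q i M') ->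
  (forall i, (i < n)%nat -> exists M, Q i M) ->
  exists M, forall i, (i < n)%nat -> Q i M.
Proof.
  intros Hmono. induction n as [|n IH]; intros H; [exists 0; lia|].
  destruct IH as [M1 H1]; [intros i Hi; apply H; lia|].
  destruct (H n ltac:(lia)) as [M2 H2].
  exists (Rmax M1 M2). intros i Hi.
  destruct (Nat.eq_dec i n) as [->|Hne].
  - apply (Hmono n M2); [exact H2 | apply Rmax_r].
  - apply (Hmono i M1); [apply H1; lia | apply Rmax_l].
Qed.

Lemma uniform_bound_lists (Q : list bool -> R -> Prop) (m : nat) :
  (forall ds M M', Q ds M -> M <= M' -> Q ds M') ->
  (forall ds, (length ds <= m)%nat -> exists M, Q ds M) ->
  exists M, forall ds, (length ds <= m)%nat -> Q ds M.
Proof.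
  revert Q. induction m as [|m IH]; intros Q Hmono H.
  - destruct (H nil (le_n 0)) as [M HM].
    exists M. intros [|d ds] Hl; [exact HM | simpl in Hl; lia].
  - destruct (H nil ltac:(simpl; lia)) as [M0 H0].
    destruct (IH (fun ds => Q (true :: ds))) as [M1 H1];
      [intros; eapply Hmono; eauto | intros ds Hl; apply H; simpl; lia|].
    destruct (IH (fun ds => Q (false :: ds))) as [M2 H2];
      [intros; eapply Hmono; eauto | intros ds Hl; apply H; simpl; lia|].
    exists (Rmax M0 (Rmax M1 M2)). intros [|[|] ds] Hl; simpl in Hl.
    + apply (Hmono _ M0); [exact H0 | apply Rmax_l].
    + apply (Hmono _ M1); [apply H1; lia | eapply Rle_trans; [apply Rmax_l | apply Rmax_r]].
    + apply (Hmono _ M2); [apply H2; lia | eapply Rle_trans; [apply Rmax_r | apply Rmax_r]].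
Qed.

Lemma strip_bounded_mono (T M M' : R) (g : R -> R -> R) :
  strip_bounded T M g -> M <= M' -> strip_bounded T M' g.
Proof. intros Hg HM x t Ht. specialize (Hg x t Ht). lra. Qed.

Lemma derivs_bounded_mono (T M M' : R) (g : R -> R -> R) :
  derivs_bounded T M g -> M <= M' -> derivs_bounded T M' g.
Proof. intros Hg HM ds Hl. apply (strip_bounded_mono T M); auto. Qed.

Lemma strip_bounded_nonneg (T M : R) (g : R -> R -> R) (t : R) :
  strip_bounded T M g -> 0 <= t <= T -> 0 <= M.
Proof. intros Hg Ht. pose proof (Hg 0 t Ht). pose proof (Rabs_pos (g 0 t)). lra. Qed.

Lemma C3_derivs_bounded (L T : R) (g : R -> R -> R) :
  0 < L -> C3 g -> periodic_x L g -> exists M, derivs_bounded T M g.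
Proof.
  intros HL Hg Hp.
  apply (uniform_bound_lists (fun ds M => strip_bounded T M (pd ds g)) 3).
  - intros ds M M'. apply strip_bounded_mono.
  - intros ds Hl. apply (periodic_strip_bounded L T); [exact HL | now apply pd_periodic_x |].
    intros x t _. now apply C3_continuity_2d_pt.
Qed.

Lemma C3_inv_strip_bounded (L T : R) (g : R -> R -> R) :
  0 < L -> C3 g -> periodic_x L g -> (forall x t, 0 <= t <= T -> 0 < g x t) ->
  exists M, strip_bounded T M (fun x t => / g x t).
Proof.
  intros HL Hg Hp Hpos. apply (periodic_strip_bounded L T); [exact HL | |].
  - intros x t. simpl. now rewrite Hp.
  - intros x t Ht. apply continuity_2d_pt_inv.
    + exact (C3_continuity_2d_pt g nil x t Hg ltac:(simpl; lia)).
    + specialize (Hpos x t Ht). simpl. lra.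
Qed.

Lemma uniform_strip_bounds (n : nat) (L T : R) (P V : nat -> R -> R -> R) :
  0 < L ->
  (forall i, (i < n)%nat -> C3 (P i) /\ C3 (V i)) ->
  (forall i, (i < n)%nat -> periodic_x L (P i) /\ periodic_x L (V i)) ->
  (forall i, (i < n)%nat -> forall x t, 0 <= t <= T -> 0 < P i x t) ->
  exists M, 0 < M /\ forall i, (i < n)%nat ->
    derivs_bounded T M (P i) /\ derivs_bounded T M (V i)
    /\ strip_bounded T M (fun x t => / P i x t).
Proof.
  intros HL HC Hper Hpos.
  destruct (uniform_bound_nat (fun i M => derivs_bounded T M (P i) /\ derivs_bounded T M (V i)
                                /\ strip_bounded T M (fun x t => / P i x t)) n) as [M HM].
  - intros i M M' (BP & BV & BI) HMM'.
    split; [|split]; eauto using derivs_bounded_mono, strip_bounded_mono.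
  - intros i Hi. destruct (HC i Hi) as [CP CV]. destruct (Hper i Hi) as [pP pV].
    destruct (C3_derivs_bounded L T (P i) HL CP pP) as [M1 H1].
    destruct (C3_derivs_bounded L T (V i) HL CV pV) as [M2 H2].
    destruct (C3_inv_strip_bounded L T (P i) HL CP pP (Hpos i Hi)) as [M3 H3].
    exists (Rmax M1 (Rmax M2 M3)).
    pose proof (Rmax_l M1 (Rmax M2 M3)). pose proof (Rmax_r M1 (Rmax M2 M3)).
    pose proof (Rmax_l M2 M3). pose proof (Rmax_r M2 M3).
    split; [|split]; [eapply derivs_bounded_mono | eapply derivs_bounded_mono
                     | eapply strip_bounded_mono]; eauto; lra.
  - exists (Rmax 1 M). split; [pose proof (Rmax_l 1 M); lra|].
    intros i Hi. destruct (HM i Hi) as (BP & BV & BI).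
    split; [|split]; eauto using derivs_bounded_mono, strip_bounded_mono, Rmax_r.
Qed.

Lemma square_array_bounded (n : nat) (b : nat -> nat -> R) :
  exists B, forall i, (i < n)%nat -> forall j, (j < n)%nat -> Rabs (b i j) <= B.
Proof.
  apply uniform_bound_nat.
  - intros i B B' Hb HB j Hj. specialize (Hb j Hj). lra.
  - intros i _. apply (uniform_bound_nat (fun j B => Rabs (b i j) <= B)).
    + intros j B B' Hb HB. lra.
    + intros j _. exists (Rabs (b i j)). lra.
Qed.

Section StripEstimates.

Variables (T M : R) (g : R -> R -> R).
Hypothesis g_C3 : C3 g.
Hypothesis g_bounded : derivs_bounded T M g.

Lemma strip_midpoint_error_le (x t δ : R) : 0 <= t <= T ->
  Rabs ((g (x - δ) t + g (x + δ) t) / 2 - g x t) <= M * δ ^ 2.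
Proof.
  intros Ht.
  apply (midpoint_error_le (fun y => g y t) (fun y => pd (true :: nil) g y t)
           (fun y => pd (true :: true :: nil) g y t)); intros y.
  - exact (C3_is_derive_x g nil y t g_C3 ltac:(simpl; lia)).
  - exact (C3_is_derive_x g (true :: nil) y t g_C3 ltac:(simpl; lia)).
  - exact (g_bounded (true :: true :: nil) ltac:(simpl; lia) y t Ht).
Qed.

Lemma strip_central_quotient_error_le (x t δ : R) : 0 <= t <= T -> 0 < δ ->
  Rabs ((g (x + δ) t - g (x - δ) t) / (2 * δ) - pd (true :: nil) g x t) <= M * δ ^ 2.
Proof.
  intros Ht Hδ.
  apply (central_quotient_error_le (fun y => g y t) (fun y => pd (true :: nil) g y t)
           (fun y => pd (true :: true :: nil) g y t)
           (fun y => pd (true :: true :: true :: nil) g y t)); [intros y ..| exact Hδ].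
  - exact (C3_is_derive_x g nil y t g_C3 ltac:(simpl; lia)).
  - exact (C3_is_derive_x g (true :: nil) y t g_C3 ltac:(simpl; lia)).
  - exact (C3_is_derive_x g (true :: true :: nil) y t g_C3 ltac:(simpl; lia)).
  - exact (g_bounded (true :: true :: true :: nil) ltac:(simpl; lia) y t Ht).
Qed.

Lemma strip_time_lipschitz (ds : list bool) (x t0 t1 : R) :
  (length ds <= 2)%nat -> 0 <= t0 <= T -> 0 <= t1 <= T ->
  Rabs (pd ds g x t1 - pd ds g x t0) <= M * Rabs (t1 - t0).
Proof.
  intros Hl Ht0 Ht1.
  apply (MVT_Rabs_le (fun s => pd ds g x s) (fun s => pd (false :: ds) g x s)).
  intros s Hs. split.
  - apply C3_is_derive_t; [exact g_C3 | lia].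
  - apply (g_bounded (false :: ds)); [simpl; lia|].
    unfold Rmin, Rmax in Hs. destruct Rle_dec; lra.
Qed.

Lemma strip_backward_quotient_error_le (x t dt : R) : 0 <= t -> 0 < dt -> t + dt <= T ->
  Rabs ((g x (t + dt) - g x t) / dt - pd (false :: nil) g x (t + dt)) <= M * dt.
Proof.
  intros Ht Hdt HT.
  pose proof (taylor1_Rabs_le (fun s => g x s) (fun s => pd (false :: nil) g x s)
                (fun s => pd (false :: false :: nil) g x s) (t + dt) t M) as K.
  replace ((g x (t + dt) - g x t) / dt - pd (false :: nil) g x (t + dt))
    with (- (g x t - g x (t + dt) - (t - (t + dt)) * pd (false :: nil) g x (t + dt)) / dt)
    by (field; lra).
  unfold Rdiv. rewrite Rabs_mult, Rabs_Ropp, Rabs_inv, (Rabs_pos_eq dt) by lra.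
  apply (Rmult_le_reg_r dt); [exact Hdt|].
  rewrite Rmult_assoc, Rinv_l, Rmult_1_r by lra.
  eapply Rle_trans; [apply K | apply Req_le; ring].
  intros s Hs.
  assert (0 <= s <= T) by (unfold Rmin, Rmax in Hs; destruct Rle_dec; lra).
  split; [|split].
  - exact (C3_is_derive_t g nil x s g_C3 ltac:(simpl; lia)).
  - exact (C3_is_derive_t g (false :: nil) x s g_C3 ltac:(simpl; lia)).
  - now apply (g_bounded (false :: false :: nil)); [simpl; lia|].
Qed.

Lemma strip_average_error_le (x t dt δ : R) : 0 <= t -> 0 < dt -> t + dt <= T ->
  Rabs ((g (x - δ) t + g (x + δ) t) / 2 - g x (t + dt)) <= M * (dt + δ ^ 2).
Proof.
  intros Ht Hdt HT.
  pose proof (strip_midpoint_error_le x t δ ltac:(lra)) as Hm.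
  pose proof (strip_time_lipschitz nil x t (t + dt) ltac:(simpl; lia) ltac:(lra) ltac:(lra))
    as Hl.
  simpl in Hl. replace (t + dt - t) with dt in Hl by ring. rewrite (Rabs_pos_eq dt) in Hl by lra.
  replace ((g (x - δ) t + g (x + δ) t) / 2 - g x (t + dt))
    with (((g (x - δ) t + g (x + δ) t) / 2 - g x t) - (g x (t + dt) - g x t)) by ring.
  unfold Rminus at 1. eapply Rle_trans; [apply Rabs_triang|].
  rewrite Rabs_Ropp. lra.
Qed.

Section Logarithm.

Hypothesis g_pos : forall x t, 0 <= t <= T -> 0 < g x t.
Hypothesis g_inv_bounded : strip_bounded T M (fun x t => / g x t).

Lemma strip_inv_M_le (x t : R) : 0 <= t <= T -> / M <= g x t.
Proof.
  intros Ht. specialize (g_pos x t Ht). specialize (g_inv_bounded x t Ht). simpl in *.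
  rewrite Rabs_pos_eq in g_inv_bounded by (apply Rlt_le, Rinv_0_lt_compat; lra).
  rewrite <- (Rinv_inv (g x t)).
  apply Rinv_le_contravar; [apply Rinv_0_lt_compat; lra | exact g_inv_bounded].
Qed.

Lemma strip_Derive_ln (x t : R) : 0 <= t <= T ->
  Derive (fun y => ln (g y t)) x = pd (true :: nil) g x t / g x t.
Proof.
  intros Ht. apply is_derive_unique.
  pose proof (C3_is_derive_x g nil x t g_C3 ltac:(simpl; lia)) as Hd.
  specialize (g_pos x t Ht).
  auto_derive; [split; [exists (pd (true :: nil) g x t); exact Hd | split; [lra | easy]]|].
  simpl. field. lra.
Qed.

Lemma strip_log_derivative_le (x t : R) : 0 <= t <= T ->
  Rabs (pd (true :: nil) g x t / g x t) <= M ^ 2.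
Proof.
  intros Ht. unfold Rdiv. rewrite Rabs_mult. replace (M ^ 2) with (M * M) by ring.
  apply Rmult_le_compat; auto using Rabs_pos.
  exact (g_bounded (true :: nil) ltac:(simpl; lia) x t Ht).
Qed.

Lemma strip_log_central_quotient_error_le (x t δ : R) : 0 <= t <= T -> 0 < δ ->
  Rabs ((ln (g (x + δ) t) - ln (g (x - δ) t)) / (2 * δ) - pd (true :: nil) g x t / g x t)
  <= (M ^ 2 + 3 * M ^ 4 + 2 * M ^ 6) * δ ^ 2.
Proof.
  intros Ht Hδ.
  apply (log_central_quotient_error_le (fun y => g y t) (fun y => pd (true :: nil) g y t)
           (fun y => pd (true :: true :: nil) g y t)
           (fun y => pd (true :: true :: true :: nil) g y t)); [intros y ..| exact Hδ].
  - exact (C3_is_derive_x g nil y t g_C3 ltac:(simpl; lia)).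
  - exact (C3_is_derive_x g (true :: nil) y t g_C3 ltac:(simpl; lia)).
  - exact (C3_is_derive_x g (true :: true :: nil) y t g_C3 ltac:(simpl; lia)).
  - now apply g_pos.
  - repeat split; [apply (g_bounded (true :: nil)) | apply (g_bounded (true :: true :: nil))
                  | apply (g_bounded (true :: true :: true :: nil)) | apply g_inv_bounded];
      simpl; auto; lia.
Qed.

End Logarithm.

End StripEstimates.

Lemma flux_quotient_error_le (T M : R) (p v : R -> R -> R) (x t dt h : R) :
  C3 p -> C3 v -> derivs_bounded T M p -> derivs_bounded T M v ->
  0 <= t -> 0 < dt -> t + dt <= T -> 0 < h ->
  Rabs (((p x t + p (x + h) t) / 2 * v (x + h / 2) (t + dt)
         - (p (x - h) t + p x t) / 2 * v (x - h / 2) (t + dt)) / h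
        - (pd (true :: nil) p x (t + dt) * v x (t + dt)
           + p x (t + dt) * pd (true :: nil) v x (t + dt)))
  <= 3 * M ^ 2 * (dt + h ^ 2).
Proof.
  intros Cp Cv Bp Bv Ht Hdt HT Hh.
  assert (Ht0 : 0 <= t <= T) by lra.
  assert (Ht1 : 0 <= t + dt <= T) by lra.
  pose proof (strip_bounded_nonneg T M p t (Bp nil ltac:(simpl; lia)) Ht0) as HM.
  rewrite discrete_product_rule by lra.
  replace (((p x t + p (x + h) t) / 2 - (p (x - h) t + p x t) / 2) / h)
    with ((p (x + h) t - p (x - h) t) / (2 * h)) by (field; lra).
  replace ((v (x + h / 2) (t + dt) - v (x - h / 2) (t + dt)) / h)
    with ((v (x + h / 2) (t + dt) - v (x - h / 2) (t + dt)) / (2 * (h / 2))) by (field; lra).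
  pose proof (strip_midpoint_error_le T M v Cv Bv x (t + dt) (h / 2) Ht1) as Evb.
  pose proof (strip_central_quotient_error_le T M v Cv Bv x (t + dt) (h / 2) Ht1 ltac:(lra))
    as EX.
  pose proof (strip_average_error_le T M p Cp Bp x t dt h Ht Hdt HT) as Epb.
  pose proof (strip_central_quotient_error_le T M p Cp Bp x t h Ht0 Hh) as EZ.
  pose proof (strip_time_lipschitz T M p Cp Bp (true :: nil) x t (t + dt) ltac:(simpl; lia)
                Ht0 Ht1) as Epx.
  pose proof (strip_time_lipschitz T M p Cp Bp nil x t (t + dt) ltac:(simpl; lia) Ht0 Ht1)
    as Ep.
  simpl in Ep. replace (t + dt - t) with dt in Epx, Ep by ring.
  rewrite (Rabs_pos_eq dt) in Epx, Ep by lra.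
  assert (Hpb : Rabs (((p (x - h) t + p x t) / 2 + (p x t + p (x + h) t) / 2) / 2
                      - p x (t + dt)) <= M * (dt + h ^ 2)).
  { replace (((p (x - h) t + p x t) / 2 + (p x t + p (x + h) t) / 2) / 2 - p x (t + dt))
      with (((p (x - h) t + p (x + h) t) / 2 - p x (t + dt) + - (p x (t + dt) - p x t)) / 2)
      by field.
    apply Rabs_half_sum_le; [exact Epb|]. rewrite Rabs_Ropp.
    pose proof (pow2_ge_0 h). nra. }
  assert (Hpx : Rabs ((p (x + h) t - p (x - h) t) / (2 * h) - pd (true :: nil) p x (t + dt))
                <= M * h ^ 2 + M * dt).
  { eapply Rle_trans; [|apply Rplus_le_compat; [exact EZ | exact Epx]].
    rewrite <- Rabs_Ropp with (x := pd _ p x (t + dt) - _).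
    eapply Rle_trans; [|apply Rabs_triang]. apply Req_le. f_equal. ring. }
  assert (Bv0 : forall y, Rabs (v y (t + dt)) <= M)
    by (intros y; exact (Bv nil ltac:(simpl; lia) y (t + dt) Ht1)).
  assert (Bp0 : forall y, Rabs (p y t) <= M)
    by (intros y; exact (Bp nil ltac:(simpl; lia) y t Ht0)).
  pose proof (Rabs_mul_sub_le _ _ (v x (t + dt)) (pd (true :: nil) p x (t + dt)) _ _ _
                ltac:(apply Rabs_half_sum_le; apply Bv0)
                (Bp (true :: nil) ltac:(simpl; lia) x (t + dt) Ht1) Evb Hpx) as F1.
  pose proof (Rabs_mul_sub_le _ _ (p x (t + dt)) (pd (true :: nil) v x (t + dt)) _ _ _
                ltac:(apply Rabs_half_sum_le; apply Rabs_half_sum_le; apply Bp0)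
                (Bv (true :: nil) ltac:(simpl; lia) x (t + dt) Ht1) Hpb EX) as F2.
  match goal with
  | |- Rabs (?a * ?b + ?c * ?d - (?e * ?f + ?g * ?k)) <= _ =>
      replace (a * b + c * d - (e * f + g * k)) with ((a * b - f * e) + (c * d - g * k))
        by ring
  end.
  eapply Rle_trans; [apply Rabs_triang|].
  assert (0 <= M ^ 2 * dt) by (apply Rmult_le_pos; [apply pow2_ge_0 | lra]).
  assert (0 <= M ^ 2 * h ^ 2) by (apply Rmult_le_pos; apply pow2_ge_0).
  lra.
Qed.

Lemma transport_consistency_le (T M : R) (p v : R -> R -> R) (x t dt h : R) :
  C3 p -> C3 v -> derivs_bounded T M p -> derivs_bounded T M v ->
  0 <= t -> 0 < dt -> t + dt <= T -> 0 < h ->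
  Derive (fun s => p x s) (t + dt) + Derive (fun y => p y (t + dt) * v y (t + dt)) x = 0 ->
  Rabs ((p x (t + dt) - p x t) / dt
        + ((p x t + p (x + h) t) / 2 * v (x + h / 2) (t + dt)
           - (p (x - h) t + p x t) / 2 * v (x - h / 2) (t + dt)) / h)
  <= (M + 3 * M ^ 2) * (dt + h ^ 2).
Proof.
  intros Cp Cv Bp Bv Ht Hdt HT Hh Heq.
  assert (Ht0 : 0 <= t <= T) by lra.
  set (t1 := t + dt) in *.
  set (flux := pd (true :: nil) p x t1 * v x t1 + p x t1 * pd (true :: nil) v x t1).
  assert (Hflux : pd (false :: nil) p x t1 + flux = 0).
  { rewrite <- Heq. f_equal. symmetry. apply is_derive_unique.
    apply (is_derive_mult (fun y => p y t1) (fun y => v y t1));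
      [ exact (C3_is_derive_x p nil x t1 Cp ltac:(simpl; lia))
      | exact (C3_is_derive_x v nil x t1 Cv ltac:(simpl; lia))
      | intros; apply Rmult_comm ]. }
  pose proof (strip_backward_quotient_error_le T M p Cp Bp x t dt Ht Hdt HT) as Et.
  pose proof (flux_quotient_error_le T M p v x t dt h Cp Cv Bp Bv Ht Hdt HT Hh) as Ef.
  fold t1 flux in Et, Ef.
  match goal with
  | |- Rabs (?q + ?F) <= _ =>
      replace (q + F) with ((q - pd (false :: nil) p x t1) + (F - flux)
                            + (pd (false :: nil) p x t1 + flux)) by ring
  end.
  rewrite Hflux, Rplus_0_r.
  eapply Rle_trans; [apply Rabs_triang|].
  pose proof (strip_bounded_nonneg T M p t (Bp nil ltac:(simpl; lia)) Ht0) as HM.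
  assert (0 <= M * h ^ 2) by (apply Rmult_le_pos; [exact HM | apply pow2_ge_0]).
  lra.
Qed.

Lemma Pc_edge_left (P : nat -> R -> R -> R) (h dt : R) (k j : nat) (l : Z) :
  Pc P h dt k j l = P j ((IZR l + / 2) * h - h / 2) (INR k * dt).
Proof. unfold Pc. f_equal. field. Qed.

Lemma Pc_edge_right (P : nat -> R -> R -> R) (h dt : R) (k j : nat) (l : Z) :
  Pc P h dt k j (l + 1) = P j ((IZR l + / 2) * h + h / 2) (INR k * dt).
Proof. unfold Pc. rewrite plus_IZR. f_equal. field. Qed.

Lemma tau1_cell (P V : nat -> R -> R -> R) (h dt : R) (k i : nat) (l : Z) :
  tau1 P V h dt k i l =
  (P i (IZR l * h) (INR k * dt + dt) - P i (IZR l * h) (INR k * dt)) / dt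
  + ((P i (IZR l * h) (INR k * dt) + P i (IZR l * h + h) (INR k * dt)) / 2
       * V i (IZR l * h + h / 2) (INR k * dt + dt)
     - (P i (IZR l * h - h) (INR k * dt) + P i (IZR l * h) (INR k * dt)) / 2
       * V i (IZR l * h - h / 2) (INR k * dt + dt)) / h.
Proof.
  unfold tau1, Phat, Pc, Ve.
  rewrite Z.sub_add, plus_IZR, minus_IZR, S_INR.
  replace ((INR k + 1) * dt) with (INR k * dt + dt) by ring.
  replace ((IZR l + 1) * h) with (IZR l * h + h) by ring.
  replace ((IZR l - 1) * h) with (IZR l * h - h) by ring.
  replace ((IZR l + / 2) * h) with (IZR l * h + h / 2) by field.
  replace ((IZR l - 1 + / 2) * h) with (IZR l * h - h / 2) by field.
  reflexivity.
Qed.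

Section Grid.

Variables (n : nat) (T M B : R) (b : nat -> nat -> R) (P V : nat -> R -> R -> R).
Hypothesis n_pos : (0 < n)%nat.
Hypothesis M_pos : 0 < M.
Hypothesis smooth : forall i, (i < n)%nat -> C3 (P i) /\ C3 (V i).
Hypothesis bounds : forall i, (i < n)%nat ->
  derivs_bounded T M (P i) /\ derivs_bounded T M (V i) /\ strip_bounded T M (fun x t => / P i x t).
Hypothesis P_pos : forall i, (i < n)%nat -> forall x t, 0 <= t <= T -> 0 < P i x t.
Hypothesis b_bounded : forall i, (i < n)%nat -> forall j, (j < n)%nat -> Rabs (b i j) <= B.
Hypothesis solution : is_solution n T b P V.

Variables (h dt : R) (k : nat) (l : Z).
Hypothesis h_pos : 0 < h.
Hypothesis dt_pos : 0 < dt.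
Hypothesis time_le : INR (S k) * dt <= T.

Lemma grid_times : 0 <= INR k * dt /\ INR (S k) * dt = INR k * dt + dt.
Proof.
  split; [apply Rmult_le_pos; [apply pos_INR | lra] | rewrite S_INR; ring].
Qed.

Lemma tau1_le (i : nat) : (i < n)%nat ->
  Rabs (tau1 P V h dt k i l) <= (M + 3 * M ^ 2) * (dt + h ^ 2).
Proof.
  intros Hi. destruct grid_times as [Ht0 Ht1]. rewrite Ht1 in time_le.
  destruct (smooth i Hi) as [CP CV]. destruct (bounds i Hi) as (BP & BV & _).
  rewrite tau1_cell. apply (transport_consistency_le T); auto.
  destruct (solution (INR k * dt + dt) (IZR l * h) ltac:(lra)) as [Htransport _].
  exact (Htransport i Hi).
Qed.

Lemma Phat_error_le (j : nat) : (j < n)%nat ->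
  Rabs (Phat P h dt k j l - P j ((IZR l + / 2) * h) (INR (S k) * dt)) <= M * (dt + h ^ 2).
Proof.
  intros Hj. destruct grid_times as [Ht0 Ht1]. rewrite Ht1 in time_le |- *.
  destruct (smooth j Hj) as [CP _]. destruct (bounds j Hj) as (BP & _).
  unfold Phat. rewrite Pc_edge_left, Pc_edge_right.
  eapply Rle_trans; [apply (strip_average_error_le T M (P j) CP BP); auto|].
  apply Rmult_le_compat_l; [lra|]. nra.
Qed.

Lemma Phat_inv_M_le (j : nat) : (j < n)%nat -> / M <= Phat P h dt k j l.
Proof.
  intros Hj. destruct grid_times as [Ht0 Ht1]. rewrite Ht1 in time_le.
  destruct (smooth j Hj) as [CP _]. destruct (bounds j Hj) as (_ & _ & BI).
  unfold Phat. rewrite Pc_edge_left, Pc_edge_right.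
  pose proof (strip_inv_M_le T M (P j) (P_pos j Hj) BI ((IZR l + / 2) * h - h / 2) (INR k * dt)).
  pose proof (strip_inv_M_le T M (P j) (P_pos j Hj) BI ((IZR l + / 2) * h + h / 2) (INR k * dt)).
  lra.
Qed.

Lemma DlogP_error_le (j : nat) : (j < n)%nat ->
  Rabs (DlogP P h dt k j l
        - pd (true :: nil) (P j) ((IZR l + / 2) * h) (INR (S k) * dt)
          / P j ((IZR l + / 2) * h) (INR (S k) * dt))
  <= (M ^ 2 + 3 * M ^ 4 + 2 * M ^ 6) * (dt + h ^ 2).
Proof.
  intros Hj. destruct grid_times as [Ht0 Ht1].
  destruct (smooth j Hj) as [CP _]. destruct (bounds j Hj) as (BP & _ & BI).
  unfold DlogP. rewrite Pc_edge_right, Pc_edge_left.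
  set (e := (IZR l + / 2) * h). set (t1 := INR (S k) * dt).
  replace ((ln (P j (e + h / 2) t1) - ln (P j (e - h / 2) t1)) / h)
    with ((ln (P j (e + h / 2) t1) - ln (P j (e - h / 2) t1)) / (2 * (h / 2)))
    by (field; lra).
  eapply Rle_trans;
    [apply (strip_log_central_quotient_error_le T M (P j) CP BP (P_pos j Hj) BI); unfold t1; lra|].
  apply Rmult_le_compat_l; [|nra].
  assert (0 <= M ^ 4) by (replace (M ^ 4) with ((M ^ 2) ^ 2) by ring; apply pow2_ge_0).
  assert (0 <= M ^ 6) by (replace (M ^ 6) with ((M ^ 3) ^ 2) by ring; apply pow2_ge_0).
  pose proof (pow2_ge_0 M). lra.
Qed.

Lemma Ve_bound (j : nat) : (j < n)%nat -> Rabs (Ve V h dt (S k) j l) <= M.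
Proof.
  intros Hj. destruct (bounds j Hj) as (_ & BV & _).
  destruct grid_times as [Ht0 Ht1].
  apply (BV nil); [simpl; lia | lra].
Qed.

Lemma tau2_le (i : nat) : (i < n)%nat ->
  Rabs (tau2 n b P V h dt k i l)
  <= (2 * (M ^ 2 + 3 * M ^ 4 + 2 * M ^ 6) + INR n * (2 * M ^ 4 + 2 * B * M ^ 2))
     * (dt + h ^ 2).
Proof.
  intros Hi. destruct grid_times as [Ht0 Ht1].
  set (e := (IZR l + / 2) * h). set (t1 := INR (S k) * dt).
  set (lam := fun j => pd (true :: nil) (P j) e t1 / P j e t1).
  assert (Hlam : forall j, (j < n)%nat -> Derive (fun y => ln (P j y t1)) e = lam j).
  { intros j Hj. destruct (smooth j Hj) as [CP _].
    apply (strip_Derive_ln T (P j) CP (P_pos j Hj)). unfold t1. lra. }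
  destruct (solution t1 e ltac:(unfold t1; lra)) as (_ & Hbalance & _).
  specialize (Hbalance i Hi).
  rewrite (Hlam i Hi),
    (sumR_ext n (fun j => P j e t1 * Derive (fun y => ln (P j y t1)) e)
       (fun j => P j e t1 * lam j)) in Hbalance
    by (intros j Hj; now rewrite Hlam).
  assert (Pe_pos : forall j, (j < n)%nat -> 0 < P j e t1)
    by (intros j Hj; apply (P_pos j Hj); unfold t1; lra).
  assert (lam_bound : forall j, (j < n)%nat -> Rabs (lam j) <= M ^ 2).
  { intros j Hj. destruct (bounds j Hj) as (BP & _ & BI).
    apply (strip_log_derivative_le T M (P j) BP BI). unfold t1. lra. }
  unfold tau2. eapply Rle_trans.
  - apply (flux_balance_perturbation_le n (fun j => Phat P h dt k j l) (fun j => P j e t1)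
             (fun j => DlogP P h dt k j l) lam M (M * (dt + h ^ 2))
             ((M ^ 2 + 3 * M ^ 4 + 2 * M ^ 6) * (dt + h ^ 2)) (M ^ 2)
             n_pos M_pos Phat_inv_M_le Pe_pos Phat_error_le DlogP_error_le lam_bound
             i (fun j => Ve V h dt (S k) j l) (b i) B Hi Ve_bound (b_bounded i Hi)).
    cbv beta. unfold wmean, Ve. fold e t1. lra.
  - apply Req_le. ring.
Qed.

Lemma tau3_le : Rabs (tau3 n P V h dt k l) <= INR n * M ^ 2 * (dt + h ^ 2).
Proof.
  destruct grid_times as [Ht0 Ht1].
  destruct (solution (INR (S k) * dt) ((IZR l + / 2) * h) ltac:(lra)) as (_ & _ & Hflux).
  eapply Rle_trans.
  - exact (flux_sum_perturbation_le n (fun j => Phat P h dt k j l)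
             (fun j => P j ((IZR l + / 2) * h) (INR (S k) * dt)) M (M * (dt + h ^ 2))
             Phat_error_le (fun j => Ve V h dt (S k) j l) Ve_bound Hflux).
  - apply Req_le. ring.
Qed.

End Grid.

Theorem lemma2p5 (n : nat) (L T : R) (b : nat -> nat -> R)
    (P V : nat -> R -> R -> R) :
  (2 <= n)%nat -> 0 < L -> 0 < T ->
  (forall i, (i < n)%nat -> C3 (P i) /\ C3 (V i)) ->
  (forall i, (i < n)%nat -> periodic_x L (P i) /\ periodic_x L (V i)) ->
  (forall i, (i < n)%nat -> forall x t, 0 <= t <= T -> 0 < P i x t) ->
  (forall x, sumR n (fun j => P j x 0) = 1) ->
  is_solution n T b P V ->
  exists C : R, 0 < C /\
    forall (N : nat) (dt : R) (k : nat),
      (1 <= N)%nat -> 0 < dt -> INR (S k) * dt <= T ->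
      let h := L / INR N in
      forall l : Z,
        (forall i, (i < n)%nat ->
           Rabs (tau1 P V h dt k i l) <= C * (dt + h ^ 2) /\
           Rabs (tau2 n b P V h dt k i l) <= C * (dt + h ^ 2)) /\
        Rabs (tau3 n P V h dt k l) <= C * (dt + h ^ 2).
Proof.
  intros Hn HL _ HC Hper Hpos _ Hsol.
  destruct (uniform_strip_bounds n L T P V HL HC Hper Hpos) as (M & HM & Hbounds).
  destruct (square_array_bounded n b) as [B HB].
  set (K1 := M + 3 * M ^ 2).
  set (K2 := 2 * (M ^ 2 + 3 * M ^ 4 + 2 * M ^ 6) + INR n * (2 * M ^ 4 + 2 * B * M ^ 2)).
  set (K3 := INR n * M ^ 2).
  exists (Rmax K1 (Rmax K2 K3)). split.
  { eapply Rlt_le_trans; [|apply Rmax_l]. unfold K1. pose proof (pow2_ge_0 M). lra. }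
  intros N dt k HN Hdt Hk h l.
  assert (Hh : 0 < h) by (apply Rdiv_lt_0_compat; [lra | apply lt_0_INR; lia]).
  assert (Hw : 0 <= dt + h ^ 2) by (pose proof (pow2_ge_0 h); lra).
  assert (HK : K1 <= Rmax K1 (Rmax K2 K3) /\ K2 <= Rmax K1 (Rmax K2 K3)
               /\ K3 <= Rmax K1 (Rmax K2 K3)).
  { split; [apply Rmax_l | split; eapply Rle_trans; [| apply Rmax_r | | apply Rmax_r]];
      [apply Rmax_l | apply Rmax_r]. }
  destruct HK as (HK1 & HK2 & HK3).
  split; [intros i Hi; split|]; eapply Rle_trans.
  - exact (tau1_le n T M b P V HC Hbounds Hsol h dt k l Hh Hdt Hk i Hi).
  - now apply Rmult_le_compat_r.
  - exact (tau2_le n T M B b P V ltac:(lia) HM HC Hbounds Hpos HB Hsol h dt k l Hh Hdt Hk i Hi).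
  - now apply Rmult_le_compat_r.
  - exact (tau3_le n T M b P V ltac:(lia) HM HC Hbounds Hsol h dt k l Hdt Hk).
  - now apply Rmult_le_compat_r.
Qed.
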